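(* Assume the linear payoff assumption and the rank condition $\operatorname{rank}\begin{bmatrix}A(\nu^* )\\ B(\mu^* )\end{bmatrix}=d$. Let $\epsilon_1,\epsilon_2>0$ with $\epsilon_1<\min_{a}\mu^*(a)$ and $\epsilon_2<\min_b\nu^*(b)$. Let $\widehat\mu\in\Delta(\mathcal A)$ and $\widehat\nu\in\Delta(\mathcal B)$ satisfy $\mathrm{TV}(\widehat\mu,\mu^* )\le\epsilon_1/2$ and $\mathrm{TV}(\widehat\nu,\nu^* )\le\epsilon_2/2$. Let $$\widehat\theta\in\arg\min_{\theta\in\mathbb{R}^d}\Big\|\begin{bmatrix}A(\widehat\nu)\\ B(\widehat\mu)\end{bmatrix}\theta-\begin{bmatrix}c(\widehat\mu)\\ d(\widehat\nu)\end{bmatrix}\Big\|^2 .$$ Then there exist constants $\epsilon_0,C>0$, depending only on $\phi,\eta,\mu^*,\nu^*$, with the following property. If $\epsilon_1,\epsilon_2\le\epsilon_0$, then the least-squares minimizer is unique and $$\|\widehat\theta-\theta^*\|^2\le C\Big(\epsilon_1^2\big(1+m(\epsilon_2^2+1)\big)+\epsilon_2^2\big(1+n(\epsilon_1^2+1)\big)\Big).$$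
   Context: Let $m,n\ge 2$, $\mathcal A=\{1,\dots,m\}$, $\mathcal B=\{1,\dots,n\}$, and $\eta>0$. For a payoff matrix $Q\in\mathbb{R}^{m\times n}$, the entropy-regularized zero-sum matrix game is $$\max_{\mu\in\Delta(\mathcal A)}\min_{\nu\in\Delta(\mathcal B)}\ \mu^\top Q\nu+\eta^{-1}\mathcal H(\mu)-\eta^{-1}\mathcal H(\nu),\qquad \mathcal H(\pi)=-\sum_i\pi_i\log\pi_i .$$ Its unique saddle point, the quantal response equilibrium (QRE) $(\mu,\nu)$, is characterized by $$\mu(a)=\frac{\exp\big(\eta\sum_b Q(a,b)\nu(b)\big)}{\sum_{a'}\exp\big(\eta\sum_bQ(a',b)\nu(b)\big)},\qquad \nu(b)=\frac{\exp\big(-\eta\sum_a Q(a,b)\mu(a)\big)}{\sum_{b'}\exp\big(-\eta\sum_aQ(a,b')\mu(a)\big)}.$$ Linear payoff assumption: there are a feature map $\phi:\mathcal A\times\mathcal B\to\mathbb{R}^d$ and $\theta^*\in\mathbb{R}^d$ with $\|\theta^*\|^2\le M$ such that $Q(a,b)=\langle\phi(a,b),\theta^*\rangle$ for all $(a,b)$. $(\mu^*,\nu^* )$ denotes the QRE of this $Q$; all its entries are positive. For $\mu\in\Delta(\mathcal A)$ and $\nu\in\Delta(\mathcal B)$ with positive entries, define: - $A(\nu)\in\mathbb{R}^{(m-1)\times d}$, whose row indexed by $a=2,\dots,m$ is $\sum_{b}\nu(b)\,(\phi(a,b)-\phi(1,b))^\top$; - $B(\mu)\in\mathbb{R}^{(n-1)\times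 d}$, whose row indexed by $b=2,\dots,n$ is $\sum_a\mu(a)\,(\phi(a,b)-\phi(a,1))^\top$; - $c(\mu)=\big(\eta^{-1}\log(\mu(a)/\mu(1))\big)_{a=2}^m\in\mathbb{R}^{m-1}$; - $d(\nu)=\big(-\eta^{-1}\log(\nu(b)/\nu(1))\big)_{b=2}^n\in\mathbb{R}^{n-1}$. $\mathrm{TV}(\mu,\mu')=\tfrac12\|\mu-\mu'\|_1$. *)

From HB Require Import structures.
From mathcomp Require Import all_boot all_order all_algebra.
From mathcomp Require Import reals sequences exp.
Set Implicit Arguments. Unset Strict Implicit. Unset Printing Implicit Defensive.
Import Order.TTheory GRing.Theory Num.Theory.
Local Open Scope ring_scope.

(* Actions are the naturals 1..m (player 1) and 1..n (player 2), as in the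
   paper.  A feature map is phi : nat -> nat -> 'cV[R]_d (only values on
   {1..m} x {1..n} matter); distributions are functions nat -> R (only values
   on the action set matter). *)

Section Defs.
Variable R : realType.

Definition is_dist (m : nat) (mu : nat -> R) : Prop :=
  (forall a, (1 <= a <= m)%N -> 0 <= mu a) /\ \sum_(1 <= a < m.+1) mu a = 1.

Definition pos_dist (m : nat) (mu : nat -> R) : Prop :=
  forall a, (1 <= a <= m)%N -> 0 < mu a.

Definition TV (m : nat) (mu mu' : nat -> R) : R :=
  2^-1 * \sum_(1 <= a < m.+1) `|mu a - mu' a|.

Definition dotv (d : nat) (x y : 'cV[R]_d) : R := \sum_(k < d) x k 0 * y k 0.

Definition sqnorm (p : nat) (x : 'cV[R]_p) : R := \sum_(k < p) x k 0 ^+ 2.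

Definition payoff (d : nat) (phi : nat -> nat -> 'cV[R]_d) (theta : 'cV[R]_d)
  (a b : nat) : R := dotv (phi a b) theta.

Definition is_QRE (m n : nat) (eta : R) (Q : nat -> nat -> R)
  (mu nu : nat -> R) : Prop :=
  (forall a, (1 <= a <= m)%N ->
     mu a = expR (eta * \sum_(1 <= b < n.+1) Q a b * nu b) /
            \sum_(1 <= a' < m.+1) expR (eta * \sum_(1 <= b < n.+1) Q a' b * nu b)) /\
  (forall b, (1 <= b <= n)%N ->
     nu b = expR (- eta * \sum_(1 <= a < m.+1) Q a b * mu a) /
            \sum_(1 <= b' < n.+1) expR (- eta * \sum_(1 <= a < m.+1) Q a b' * mu a)).

(* A(nu) in R^{(m-1) x d}: row i (i = 0..m-2) corresponds to action a = i+2 *)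
Definition Amat (m n d : nat) (phi : nat -> nat -> 'cV[R]_d) (nu : nat -> R)
  : 'M[R]_(m.-1, d) :=
  \matrix_(i < m.-1, k < d)
     \sum_(1 <= b < n.+1) nu b * (phi i.+2 b k 0 - phi 1%N b k 0).

(* B(mu) in R^{(n-1) x d}: row j (j = 0..n-2) corresponds to action b = j+2 *)
Definition Bmat (m n d : nat) (phi : nat -> nat -> 'cV[R]_d) (mu : nat -> R)
  : 'M[R]_(n.-1, d) :=
  \matrix_(j < n.-1, k < d)
     \sum_(1 <= a < m.+1) mu a * (phi a j.+2 k 0 - phi a 1%N k 0).

Definition cvec (m : nat) (eta : R) (mu : nat -> R) : 'cV[R]_(m.-1) :=
  \col_(i < m.-1) (eta^-1 * ln (mu i.+2 / mu 1%N)).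

Definition dvec (n : nat) (eta : R) (nu : nat -> R) : 'cV[R]_(n.-1) :=
  \col_(j < n.-1) (- eta^-1 * ln (nu j.+2 / nu 1%N)).

Definition is_lsq_min (p d : nat) (M : 'M[R]_(p, d)) (y : 'cV[R]_p)
  (theta : 'cV[R]_d) : Prop :=
  forall theta' : 'cV[R]_d,
    sqnorm (M *m theta - y) <= sqnorm (M *m theta' - y).

End Defs.

From HB Require Import structures.
From mathcomp Require Import all_boot all_order all_algebra.
From mathcomp Require Import reals sequences exp.
From mathcomp Require Import ring lra zify.

(* The true parameter solves the population system exactly: the QRE
   fixed-point equations say that G_* theta_* = y_*, where
   G_* = [A; B] and y_* = [c; d] are evaluated at the QRE.  Full column rank
   of G_* gives a constant K with |x|^2 <= K |G_* x|^2, and this coercivity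
   survives (with 4K) for every matrix within Frobenius distance O(1/K) of
   G_*.  The estimated system (G^, y^) is such a perturbation: G is affine in
   the distributions, so |G_* - G^|_F^2 = O(eps^2), and y is made of
   log-ratios, Lipschitz while the distributions stay away from zero, so
   |y^ - y_*|^2 = O(eps^2).  For a coercive least-squares problem the
   minimizer is unique and its squared distance to theta_* is O(K) times the
   residual |y^ - G^ theta_*|^2 <= 2|y^ - y_*|^2 + 2|G_* - G^|_F^2 |theta_*|^2. *)

Set Implicit Arguments.
Unset Strict Implicit.
Unset Printing Implicit Defensive.
Import Order.TTheory GRing.Theory Num.Theory.
Local Open Scope ring_scope.

Section SquaredNorms.
Variable R : realType.

Lemma normr_le_sqr (x y : R) : `|x| <= y -> x ^+ 2 <= y ^+ 2.
Proof.
move=> xy; rewrite -real_normK ?num_real //.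
by apply: lerXn2r; rewrite ?nnegrE ?(le_trans _ xy).
Qed.

Lemma sqnorm_ge0 p (x : 'cV[R]_p) : 0 <= sqnorm x.
Proof. by apply: sumr_ge0 => i _; apply: sqr_ge0. Qed.

Lemma sqnorm_le0 p (x : 'cV[R]_p) : sqnorm x <= 0 -> x = 0.
Proof.
move=> x_le0; have : sqnorm x == 0 by rewrite eq_le x_le0 sqnorm_ge0.
rewrite /sqnorm psumr_eq0 => [/allP x0|i _]; last exact: sqr_ge0.
apply/matrixP => i j; rewrite ord1 mxE.
by have /= := x0 i (mem_index_enum i); rewrite sqrf_eq0 => /eqP.
Qed.

Lemma sqnormN p (x : 'cV[R]_p) : sqnorm (- x) = sqnorm x.
Proof. by apply: eq_bigr => i _; rewrite mxE sqrrN. Qed.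

Lemma sqnormD_le p (x y : 'cV[R]_p) :
  sqnorm (x + y) <= 2 * sqnorm x + 2 * sqnorm y.
Proof.
rewrite /sqnorm !mulr_sumr -big_split /=; apply: ler_sum => i _; rewrite mxE.
rewrite -subr_ge0 (_ : _ - _ = (x i 0 - y i 0) ^+ 2) ?sqr_ge0 //; ring.
Qed.

Lemma sqnorm_col_mx p q (u : 'cV[R]_p) (v : 'cV[R]_q) :
  sqnorm (col_mx u v) = sqnorm u + sqnorm v.
Proof.
rewrite /sqnorm big_split_ord /=.
by congr (_ + _); apply: eq_bigr => i _; rewrite ?col_mxEu ?col_mxEd.
Qed.

Definition frobsq p q (A : 'M[R]_(p, q)) : R := \sum_i \sum_k A i k ^+ 2.

Lemma frobsq_ge0 p q (A : 'M[R]_(p, q)) : 0 <= frobsq A.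
Proof. by apply: sumr_ge0 => i _; apply: sumr_ge0 => k _; apply: sqr_ge0. Qed.

Lemma frobsq_col_mx p1 p2 q (A : 'M[R]_(p1, q)) (B : 'M[R]_(p2, q)) :
  frobsq (col_mx A B) = frobsq A + frobsq B.
Proof.
rewrite /frobsq big_split_ord /=.
by congr (_ + _); apply: eq_bigr => i _; apply: eq_bigr => k _;
  rewrite ?col_mxEu ?col_mxEd.
Qed.

Lemma cauchy_schwarz d (a b : 'I_d -> R) :
  (\sum_k a k * b k) ^+ 2 <= (\sum_k a k ^+ 2) * (\sum_k b k ^+ 2).
Proof.
set t := \sum_k a k ^+ 2; set s := \sum_k a k * b k; set u := \sum_k b k ^+ 2.
have t_ge0 : 0 <= t by apply: sumr_ge0 => k _; apply: sqr_ge0.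
have lagrange : 0 <= t * (t * u - s ^+ 2).
  have -> : t * (t * u - s ^+ 2) = \sum_k (t * b k - s * a k) ^+ 2.
    rewrite (eq_bigr (fun k => t ^+ 2 * b k ^+ 2 - (2 * t * s) * (a k * b k)
       + s ^+ 2 * a k ^+ 2)); last by move=> k _; ring.
    by rewrite big_split /= sumrB -!mulr_sumr -/t -/s -/u; ring.
  by apply: sumr_ge0 => k _; apply: sqr_ge0.
have [t0|t_neq0] := eqVneq t 0; last first.
  by move: lagrange; rewrite pmulr_rge0 ?subr_ge0 // lt_def t_neq0.
have a0 k : a k = 0.
  move/eqP: t0; rewrite psumr_eq0 => [/allP/(_ k (mem_index_enum k))|i _].
    by rewrite /= sqrf_eq0 => /eqP.
  exact: sqr_ge0.
rewrite /s big1 => [|k _]; last by rewrite a0 mul0r.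
by rewrite expr0n /= t0 mul0r.
Qed.

Lemma sqnorm_mulmx_le p d (A : 'M[R]_(p, d)) (x : 'cV[R]_d) :
  sqnorm (A *m x) <= frobsq A * sqnorm x.
Proof.
rewrite /sqnorm /frobsq mulr_suml; apply: ler_sum => i _; rewrite mxE.
exact: (cauchy_schwarz (fun k => A i k) (fun k => x k 0)).
Qed.

End SquaredNorms.

Section LeastSquares.
Variables (R : realType) (p d : nat).
Implicit Types (G H : 'M[R]_(p, d)) (x th : 'cV[R]_d) (y z : 'cV[R]_p).

Definition coercive (K : R) G := forall x, sqnorm x <= K * sqnorm (G *m x).

Lemma full_rank_coercive G : \rank G = d -> coercive (frobsq (pinvmx G)) G.
Proof.
move=> rkG x; have G_full : row_full G by rewrite /row_full rkG.
have pinvK : pinvmx G *m G = 1%:M.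
  by rewrite -{1}[pinvmx G]mul1mx mulmxKpV // submx_full.
by rewrite -{1}[x]mul1mx -pinvK -mulmxA; apply: sqnorm_mulmx_le.
Qed.

Lemma coercive_perturb K G H :
  coercive K G -> 0 <= K -> 2 * K * frobsq (G - H) <= 2^-1 ->
  coercive (4 * K) H.
Proof.
move=> coG K_ge0 GH_small x.
have Gx : G *m x = H *m x + (G - H) *m x by rewrite mulmxBl addrC subrK.
have := coG x; rewrite Gx => x_le.
have := ler_wpM2l K_ge0 (sqnormD_le (H *m x) ((G - H) *m x)).
have := ler_wpM2l K_ge0 (sqnorm_mulmx_le (G - H) x).
have := ler_wpM2r (sqnorm_ge0 x) GH_small.
lra.
Qed.

Lemma lsq_min_unique K H y th1 th2 :
  coercive K H -> is_lsq_min H y th1 -> is_lsq_min H y th2 -> th1 = th2.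
Proof.
move=> coH min1 min2; set mid := 2^-1 *: (th1 + th2).
have parallelogram : sqnorm (H *m th1 - y) + sqnorm (H *m th2 - y) =
    2 * sqnorm (H *m mid - y) + 2^-1 * sqnorm (H *m (th1 - th2)).
  rewrite /mid -scalemxAr mulmxDr mulmxBr /sqnorm !mulr_sumr -!big_split /=.
  by apply: eq_bigr => i _; rewrite !mxE; field.
have H12 : sqnorm (H *m (th1 - th2)) = 0.
  by have := min1 mid; have := min2 mid; have := sqnorm_ge0 (H *m (th1 - th2)); lra.
have := coH (th1 - th2); rewrite H12 mulr0 => /sqnorm_le0/eqP.
by rewrite subr_eq0 => /eqP.
Qed.

Lemma lsq_min_error K H y th th' :
  coercive K H -> 0 <= K -> is_lsq_min H y th ->
  sqnorm (th - th') <= 4 * K * sqnorm (y - H *m th').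
Proof.
move=> coH K_ge0 min_th; have := coH (th - th').
have -> : H *m (th - th') = (H *m th - y) + (y - H *m th').
  by rewrite mulmxBr addrA subrK.
have := ler_wpM2l K_ge0 (sqnormD_le (H *m th - y) (y - H *m th')).
have := min_th th'; rewrite -[sqnorm (H *m th' - y)]sqnormN opprB.
move=> /(ler_wpM2l K_ge0); lra.
Qed.

Lemma lsq_min_perturb K G H y z th_star th :
  coercive K G -> 0 <= K -> 2 * K * frobsq (G - H) <= 2^-1 ->
  G *m th_star = y -> is_lsq_min H z th ->
  (forall th', is_lsq_min H z th' -> th' = th) /\
  sqnorm (th - th_star)
    <= 32 * K * (sqnorm (z - y) + frobsq (G - H) * sqnorm th_star).
Proof.
move=> coG K_ge0 GH_small G_star min_th.
have coH := coercive_perturb coG K_ge0 GH_small.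
split=> [th' min_th'|]; first exact: lsq_min_unique coH min_th' min_th.
have := lsq_min_error th_star coH (mulr_ge0 (ler0n _ 4) K_ge0) min_th.
have -> : z - H *m th_star = (z - y) + (G - H) *m th_star.
  by rewrite mulmxBl G_star addrA subrK.
have := ler_wpM2l (mulr_ge0 (ler0n _ 16) K_ge0)
  (sqnormD_le (z - y) ((G - H) *m th_star)).
have := ler_wpM2l (mulr_ge0 (ler0n _ 32) K_ge0)
  (sqnorm_mulmx_le (G - H) th_star).
lra.
Qed.

End LeastSquares.

Section IndexedSums.
Variable R : realType.
Implicit Types (f mu nu : nat -> R).

Lemma sum_nat_ge_term f n b :
  (forall c, (1 <= c <= n)%N -> 0 <= f c) -> (1 <= b <= n)%N ->
  f b <= \sum_(1 <= c < n.+1) f c.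
Proof.
move=> f_ge0 b_in.
rewrite (bigD1_seq b) ?mem_index_iota /= ?lerDl /index_iota ?iota_uniq //.
rewrite big_seq_cond; apply: sumr_ge0 => c /andP[].
by rewrite mem_iota => c_in _; apply: f_ge0; lia.
Qed.

Lemma TV_sum_le m mu nu e :
  TV m mu nu <= e / 2 -> \sum_(1 <= a < m.+1) `|mu a - nu a| <= e.
Proof. by rewrite /TV; lra. Qed.

Lemma TV_le m mu nu e a :
  TV m mu nu <= e / 2 -> (1 <= a <= m)%N -> `|mu a - nu a| <= e.
Proof.
move=> /TV_sum_le TV_e a_in; apply: le_trans TV_e.
exact: (sum_nat_ge_term (f := fun c => `|mu c - nu c|)) (fun c _ => normr_ge0 _) a_in.
Qed.

Lemma pos_dist_lbound m mu :
  pos_dist m mu -> exists2 c, 0 < c & forall a, (1 <= a <= m)%N -> c <= mu a.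
Proof.
elim: m => [|m IHm] mu_gt0; first by exists 1 => // a; lia.
have [c c_gt0 mu_ge] : exists2 c, 0 < c & forall a, (1 <= a <= m)%N -> c <= mu a.
  by apply: IHm => a a_in; apply: mu_gt0; lia.
exists (Num.min c (mu m.+1)); first by rewrite lt_min c_gt0 mu_gt0 //; lia.
move=> a a_in; have [->|a_neq] := eqVneq a m.+1; rewrite ge_min ?lexx ?orbT //.
by rewrite mu_ge //; lia.
Qed.

Lemma TV_lbound m mu nu c e a :
  (forall a, (1 <= a <= m)%N -> c <= nu a) -> TV m mu nu <= e / 2 ->
  e <= c / 2 -> (1 <= a <= m)%N -> c / 2 <= mu a.
Proof.
move=> nu_ge mu_TV e_le a_in; have := TV_le mu_TV a_in.
by have := nu_ge a a_in; rewrite ler_norml; lra.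
Qed.

End IndexedSums.

Section LogRatios.
Variable R : realType.

Lemma ln_sub_le (x y c : R) :
  0 < c -> c <= x -> c <= y -> `|ln x - ln y| <= `|x - y| / c.
Proof.
move=> c_gt0.
suff ln_sub_le1 u v : c <= u -> c <= v -> ln u - ln v <= `|u - v| / c.
  move=> cx cy; rewrite ler_norml lerNl opprB distrC.
  by rewrite ln_sub_le1 //= distrC ln_sub_le1.
move=> cu cv; have u_gt0 := lt_le_trans c_gt0 cu; have v_gt0 := lt_le_trans c_gt0 cv.
(* ln u - ln v = ln (1 + (u - v) / v) <= (u - v) / v *)
rewrite -ln_div ?posrE // (_ : u / v = 1 + (u - v) / v); last by field; rewrite gt_eqF.
apply: le_trans (le_ln1Dx _) _.
  rewrite (_ : (u - v) / v = u / v - 1); last by field; rewrite gt_eqF.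
  by have := divr_gt0 u_gt0 v_gt0; lra.
apply: le_trans (ler_norm _) _; rewrite normrM normfV (gtr0_norm v_gt0).
by rewrite ler_wpM2l ?normr_ge0 // lef_pV2 ?posrE.
Qed.

Lemma ln_ratio_sub_le (u v u' v' c e : R) :
  0 < c -> c <= u -> c <= v -> c <= u' -> c <= v' ->
  `|u - u'| <= e -> `|v - v'| <= e ->
  `|ln (u / v) - ln (u' / v')| <= 2 * e / c.
Proof.
move=> c_gt0 cu cv cu' cv' uu' vv'.
have pos z : c <= z -> z \in Num.pos by rewrite posrE; apply: lt_le_trans.
rewrite !ln_div ?pos // (_ : _ - _ = (ln u - ln u') - (ln v - ln v')); last by ring.
apply: le_trans (ler_normB _ _) _.
have c_inv_ge0 : 0 <= c^-1 by rewrite invr_ge0 ltW.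
have := ln_sub_le c_gt0 cu cu'; have := ln_sub_le c_gt0 cv cv'.
have := ler_wpM2r c_inv_ge0 uu'; have := ler_wpM2r c_inv_ge0 vv'.
rewrite (_ : 2 * e / c = e / c + e / c); last by ring.
lra.
Qed.

(* c(mu) and d(nu) have this shape, with s = 1/eta resp. s = -1/eta; row i
   stands for action i + 2. *)
Lemma logratio_col_sub m (s c e : R) (mu mu' : nat -> R) :
  0 < c -> (forall a, (1 <= a <= m)%N -> c <= mu a) ->
  (forall a, (1 <= a <= m)%N -> c <= mu' a) ->
  (forall a, (1 <= a <= m)%N -> `|mu a - mu' a| <= e) ->
  sqnorm (\col_(i < m.-1) (s * ln (mu i.+2 / mu 1%N))
          - \col_(i < m.-1) (s * ln (mu' i.+2 / mu' 1%N)))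
    <= m.-1%:R * (2 * `|s| / c) ^+ 2 * e ^+ 2.
Proof.
move=> c_gt0 mu_ge mu'_ge mu_close.
have -> : m.-1%:R * (2 * `|s| / c) ^+ 2 * e ^+ 2
          = \sum_(i < m.-1) (2 * `|s| / c * e) ^+ 2.
  by rewrite sumr_const card_ord -mulr_natl; ring.
apply: ler_sum => i _; apply: normr_le_sqr; rewrite !mxE -mulrBr normrM.
have [a_in one_in] : (1 <= i.+2 <= m)%N /\ (1 <= 1 <= m)%N.
  by have := ltn_ord i; lia.
have := ln_ratio_sub_le c_gt0 (mu_ge _ a_in) (mu_ge _ one_in) (mu'_ge _ a_in)
  (mu'_ge _ one_in) (mu_close _ a_in) (mu_close _ one_in).
move=> /(ler_wpM2l (normr_ge0 s)).
by rewrite (_ : 2 * `|s| / c * e = `|s| * (2 * e / c)) //; ring.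
Qed.

Lemma ln_softmax_ratio m (f mu : nat -> R) a :
  (forall a, (1 <= a <= m)%N ->
     mu a = expR (f a) / \sum_(1 <= a' < m.+1) expR (f a')) ->
  (1 <= a <= m)%N -> ln (mu a / mu 1%N) = f a - f 1%N.
Proof.
move=> mu_softmax a_in; have one_in : (1 <= 1 <= m)%N by lia.
rewrite (mu_softmax _ a_in) (mu_softmax _ one_in).
set Z := \sum_(1 <= a' < m.+1) _.
have Z_gt0 : 0 < Z.
  rewrite /Z big_ltn; last by lia.
  have := expR_gt0 (f 1%N).
  have : 0 <= \sum_(2 <= a' < m.+1) expR (f a') by apply: sumr_ge0 => *; apply: expR_ge0.
  lra.
rewrite -[RHS]expRK; congr ln; rewrite expRD expRN.
by field; rewrite !gt_eqF ?expR_gt0.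
Qed.

End LogRatios.

Section Mixtures.
Variable R : realType.

Lemma mix_sub_le n (w w' D : nat -> R) e :
  \sum_(1 <= b < n.+1) `|w b - w' b| <= e ->
  `|\sum_(1 <= b < n.+1) w b * D b - \sum_(1 <= b < n.+1) w' b * D b|
    <= e * \sum_(1 <= b < n.+1) `|D b|.
Proof.
move=> w_close; rewrite -sumrB; apply: le_trans (ler_norm_sum _ _ _) _.
have D_ge0 : 0 <= \sum_(1 <= b < n.+1) `|D b| by apply: sumr_ge0.
apply: le_trans (ler_wpM2r D_ge0 w_close); rewrite mulr_suml.
rewrite big_seq [X in _ <= X]big_seq; apply: ler_sum => b.
rewrite mem_index_iota -mulrBl normrM => b_in; apply: ler_wpM2l => //.
exact: (sum_nat_ge_term (f := fun c => `|D c|)) (fun c _ => normr_ge0 _) b_in.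
Qed.

Definition mix_lip p q n (D : 'I_p -> 'I_q -> nat -> R) : R :=
  \sum_i \sum_k (\sum_(1 <= b < n.+1) `|D i k b|) ^+ 2.

Lemma mix_lip_ge0 p q n (D : 'I_p -> 'I_q -> nat -> R) : 0 <= mix_lip n D.
Proof. by apply: sumr_ge0 => i _; apply: sumr_ge0 => k _; apply: sqr_ge0. Qed.

Lemma mix_frobsq_sub p q n (D : 'I_p -> 'I_q -> nat -> R) (w w' : nat -> R) e :
  \sum_(1 <= b < n.+1) `|w b - w' b| <= e ->
  frobsq (\matrix_(i, k) \sum_(1 <= b < n.+1) w b * D i k b
          - \matrix_(i, k) \sum_(1 <= b < n.+1) w' b * D i k b)
    <= e ^+ 2 * mix_lip n D.
Proof.
move=> w_close; rewrite /frobsq /mix_lip mulr_sumr; apply: ler_sum => i _.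
rewrite mulr_sumr; apply: ler_sum => k _; rewrite !mxE -exprMn.
exact/normr_le_sqr/mix_sub_le.
Qed.

End Mixtures.

Section Game.
Variables (R : realType) (m n d : nat) (eta : R) (phi : nat -> nat -> 'cV[R]_d).

Definition design (mu nu : nat -> R) : 'M[R]_(m.-1 + n.-1, d) :=
  col_mx (Amat m n phi nu) (Bmat m n phi mu).

Definition response (mu nu : nat -> R) : 'cV[R]_(m.-1 + n.-1) :=
  col_mx (cvec m eta mu) (dvec n eta nu).

Definition lipA : R :=
  mix_lip n (fun (i : 'I_m.-1) (k : 'I_d) b => phi i.+2 b k 0 - phi 1%N b k 0).

Definition lipB : R :=
  mix_lip m (fun (j : 'I_n.-1) (k : 'I_d) a => phi a j.+2 k 0 - phi a 1%N k 0).

Lemma lipA_ge0 : 0 <= lipA. Proof. exact: mix_lip_ge0. Qed.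

Lemma lipB_ge0 : 0 <= lipB. Proof. exact: mix_lip_ge0. Qed.

Lemma design_sub_frobsq (mu nu mu' nu' : nat -> R) e1 e2 :
  \sum_(1 <= a < m.+1) `|mu a - mu' a| <= e1 ->
  \sum_(1 <= b < n.+1) `|nu b - nu' b| <= e2 ->
  frobsq (design mu nu - design mu' nu') <= e2 ^+ 2 * lipA + e1 ^+ 2 * lipB.
Proof.
move=> mu_close nu_close.
rewrite /design opp_col_mx add_col_mx frobsq_col_mx.
by apply: lerD; apply: mix_frobsq_sub.
Qed.

Lemma Amat_mulmx nu theta (i : 'I_m.-1) :
  (Amat m n phi nu *m theta) i 0 =
  \sum_(1 <= b < n.+1) payoff phi theta i.+2 b * nu b
  - \sum_(1 <= b < n.+1) payoff phi theta 1%N b * nu b.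
Proof.
rewrite mxE (eq_bigr (fun k => \sum_(1 <= b < n.+1)
   nu b * (phi i.+2 b k 0 - phi 1%N b k 0) * theta k 0)); last first.
  by move=> k _; rewrite mxE mulr_suml.
rewrite exchange_big -sumrB /=; apply: eq_bigr => b _.
by rewrite /payoff /dotv !mulr_suml -sumrB; apply: eq_bigr => k _; ring.
Qed.

Lemma Bmat_mulmx mu theta (j : 'I_n.-1) :
  (Bmat m n phi mu *m theta) j 0 =
  \sum_(1 <= a < m.+1) payoff phi theta a j.+2 * mu a
  - \sum_(1 <= a < m.+1) payoff phi theta a 1%N * mu a.
Proof.
rewrite mxE (eq_bigr (fun k => \sum_(1 <= a < m.+1)
   mu a * (phi a j.+2 k 0 - phi a 1%N k 0) * theta k 0)); last first.
  by move=> k _; rewrite mxE mulr_suml.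
rewrite exchange_big -sumrB /=; apply: eq_bigr => a _.
by rewrite /payoff /dotv !mulr_suml -sumrB; apply: eq_bigr => k _; ring.
Qed.

Lemma QRE_design_eq theta (mu nu : nat -> R) :
  0 < eta -> is_QRE m n eta (payoff phi theta) mu nu ->
  design mu nu *m theta = response mu nu.
Proof.
move=> eta_gt0 [mu_softmax nu_softmax]; have eta_neq0 := lt0r_neq0 eta_gt0.
rewrite mul_col_mx; congr col_mx; apply/matrixP => i k; rewrite ord1.
- have i_in : (1 <= i.+2 <= m)%N by have := ltn_ord i; lia.
  rewrite Amat_mulmx mxE (ln_softmax_ratio
    (f := fun a => eta * \sum_(1 <= b < n.+1) payoff phi theta a b * nu b)
    mu_softmax i_in).
  by field.
- have i_in : (1 <= i.+2 <= n)%N by have := ltn_ord i; lia.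
  rewrite Bmat_mulmx mxE (ln_softmax_ratio
    (f := fun b => - eta * \sum_(1 <= a < m.+1) payoff phi theta a b * mu a)
    nu_softmax i_in).
  by field.
Qed.

End Game.

Section Estimation.
Variables (R : realType) (m n d : nat) (eta : R) (phi : nat -> nat -> 'cV[R]_d).
Variables (theta_star : 'cV[R]_d) (mu_star nu_star : nat -> R) (c1 c2 : R).
Hypotheses (c1_gt0 : 0 < c1) (c2_gt0 : 0 < c2).
Hypothesis mu_star_ge : forall a, (1 <= a <= m)%N -> c1 <= mu_star a.
Hypothesis nu_star_ge : forall b, (1 <= b <= n)%N -> c2 <= nu_star b.
Hypothesis design_star :
  design m n phi mu_star nu_star *m theta_star = response m n eta mu_star nu_star.
Hypothesis design_star_full : \rank (design m n phi mu_star nu_star) = d.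

Let K := frobsq (pinvmx (design m n phi mu_star nu_star)).
Let L := lipA m n phi + lipB m n phi.
Let Lc := m.-1%:R * (2 * `|eta^-1| / (c1 / 2)) ^+ 2.
Let Ld := n.-1%:R * (2 * `|- eta^-1| / (c2 / 2)) ^+ 2.
Let q := (4 * K * L + 1)^-1.
Let C := 32 * K * (Lc + Ld + L * sqnorm theta_star).

Let K_ge0 : 0 <= K := frobsq_ge0 _.
Let L_ge0 : 0 <= L. Proof. by rewrite addr_ge0 ?lipA_ge0 ?lipB_ge0. Qed.
Let KL_ge0 : 0 <= K * L := mulr_ge0 K_ge0 L_ge0.
Let Lc_ge0 : 0 <= Lc. Proof. by rewrite mulr_ge0 ?sqr_ge0. Qed.
Let Ld_ge0 : 0 <= Ld. Proof. by rewrite mulr_ge0 ?sqr_ge0. Qed.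
Let q_gt0 : 0 < q.
Proof. by have := KL_ge0; rewrite invr_gt0; lra. Qed.

Section Sample.
Variables (e1 e2 : R) (mu nu : nat -> R).
Hypotheses (e1_le : e1 <= c1 / 2) (e2_le : e2 <= c2 / 2).
Hypotheses (e1_sqr : e1 ^+ 2 <= q) (e2_sqr : e2 ^+ 2 <= q).
Hypotheses (mu_TV : TV m mu mu_star <= e1 / 2) (nu_TV : TV n nu nu_star <= e2 / 2).

Lemma sample_design_frobsq :
  frobsq (design m n phi mu_star nu_star - design m n phi mu nu)
    <= e2 ^+ 2 * lipA m n phi + e1 ^+ 2 * lipB m n phi.
Proof.
by apply: design_sub_frobsq; rewrite (eq_bigr _ (fun a _ => distrC _ _));
  apply: TV_sum_le.
Qed.

Lemma sample_design_small :
  2 * K * frobsq (design m n phi mu_star nu_star - design m n phi mu nu)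
    <= 2^-1.
Proof.
have frob_le : frobsq (design m n phi mu_star nu_star - design m n phi mu nu)
    <= q * L.
  have := sample_design_frobsq.
  have := ler_wpM2r (lipA_ge0 m n phi) e2_sqr.
  have := ler_wpM2r (lipB_ge0 m n phi) e1_sqr.
  by rewrite /L; lra.
have qKL : q * (4 * K * L + 1) = 1 by rewrite mulVf //; have := KL_ge0; lra.
by have := q_gt0; have := ler_wpM2l K_ge0 frob_le; lra.
Qed.

Lemma sample_response_sqnorm :
  sqnorm (response m n eta mu nu - response m n eta mu_star nu_star)
    <= Lc * e1 ^+ 2 + Ld * e2 ^+ 2.
Proof.
have c1_half : 0 < c1 / 2 by rewrite divr_gt0.
have c2_half : 0 < c2 / 2 by rewrite divr_gt0.
have mu_star_ge' a : (1 <= a <= m)%N -> c1 / 2 <= mu_star a.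
  by move=> a_in; have := mu_star_ge a_in; lra.
have nu_star_ge' b : (1 <= b <= n)%N -> c2 / 2 <= nu_star b.
  by move=> b_in; have := nu_star_ge b_in; lra.
rewrite /response opp_col_mx add_col_mx sqnorm_col_mx; apply: lerD.
  apply: logratio_col_sub c1_half _ mu_star_ge' (fun a => TV_le mu_TV).
  by move=> a; apply: TV_lbound mu_star_ge mu_TV e1_le.
apply: logratio_col_sub c2_half _ nu_star_ge' (fun b => TV_le nu_TV).
by move=> b; apply: TV_lbound nu_star_ge nu_TV e2_le.
Qed.

Lemma sample_residual_le :
  sqnorm (response m n eta mu nu - response m n eta mu_star nu_star)
  + frobsq (design m n phi mu_star nu_star - design m n phi mu nu)
    * sqnorm theta_star
    <= (Lc + Ld + L * sqnorm theta_star) * (e1 ^+ 2 + e2 ^+ 2).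
Proof.
have st_ge0 := sqnorm_ge0 theta_star.
have := sample_response_sqnorm; have := ler_wpM2r st_ge0 sample_design_frobsq.
have := mulr_ge0 Lc_ge0 (sqr_ge0 e2); have := mulr_ge0 Ld_ge0 (sqr_ge0 e1).
have := mulr_ge0 (mulr_ge0 (lipA_ge0 m n phi) st_ge0) (sqr_ge0 e1).
have := mulr_ge0 (mulr_ge0 (lipB_ge0 m n phi) st_ge0) (sqr_ge0 e2).
by rewrite /L; lra.
Qed.

Lemma sample_lsq_error theta :
  is_lsq_min (design m n phi mu nu) (response m n eta mu nu) theta ->
  (forall theta',
    is_lsq_min (design m n phi mu nu) (response m n eta mu nu) theta' ->
    theta' = theta) /\
  sqnorm (theta - theta_star) <= C * (e1 ^+ 2 + e2 ^+ 2).
Proof.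
move=> min_theta.
have [unique err] := lsq_min_perturb (full_rank_coercive design_star_full) K_ge0
  sample_design_small design_star min_theta.
split=> //; apply: le_trans err _.
have := ler_wpM2l (mulr_ge0 (ler0n _ 32) K_ge0) sample_residual_le.
by rewrite /C -/K; lra.
Qed.

End Sample.

Lemma estimation_rate :
  exists2 eps0, 0 < eps0 & exists2 C, 0 <= C &
    forall e1 e2 (mu nu : nat -> R), 0 < e1 -> 0 < e2 ->
    e1 <= eps0 -> e2 <= eps0 ->
    TV m mu mu_star <= e1 / 2 -> TV n nu nu_star <= e2 / 2 ->
    forall theta,
    is_lsq_min (design m n phi mu nu) (response m n eta mu nu) theta ->
    (forall theta',
      is_lsq_min (design m n phi mu nu) (response m n eta mu nu) theta' ->
      theta' = theta) /\
    sqnorm (theta - theta_star) <= C * (e1 ^+ 2 + e2 ^+ 2).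
Proof.
exists (Num.min (Num.min (c1 / 2) (c2 / 2)) (Num.min 1 q)).
  by rewrite !lt_min !divr_gt0 ?ltr01.
exists C.
  rewrite /C; apply: mulr_ge0; first exact: mulr_ge0.
  by rewrite !addr_ge0 // mulr_ge0 ?sqnorm_ge0.
have sqr_le e : 0 < e -> e <= 1 -> e <= q -> e ^+ 2 <= q.
  move=> e_gt0 e_le1 e_leq; rewrite expr2 -[q]mul1r.
  by apply: ler_pM; rewrite ?(ltW e_gt0).
move=> e1 e2 mu nu e1_gt0 e2_gt0; rewrite !le_min.
move=> /andP[/andP[e1_le _] /andP[e1_le1 e1_leq]].
move=> /andP[/andP[_ e2_le] /andP[e2_le1 e2_leq]] mu_TV nu_TV theta.
exact: sample_lsq_error e1_le e2_le (sqr_le _ e1_gt0 e1_le1 e1_leq)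
  (sqr_le _ e2_gt0 e2_le1 e2_leq) mu_TV nu_TV theta.
Qed.

End Estimation.

Theorem mainTheorem2 (R : realType) (m n d : nat) (eta M : R)
  (phi : nat -> nat -> 'cV[R]_d) (theta_star : 'cV[R]_d)
  (mu_star nu_star : nat -> R) :
  (2 <= m)%N -> (2 <= n)%N -> 0 < eta ->
  sqnorm theta_star <= M ->
  is_dist m mu_star -> is_dist n nu_star ->
  is_QRE m n eta (payoff phi theta_star) mu_star nu_star ->
  pos_dist m mu_star -> pos_dist n nu_star ->
  \rank (col_mx (Amat m n phi nu_star) (Bmat m n phi mu_star)) = d ->
  exists eps0 C : R, 0 < eps0 /\ 0 < C /\
    forall (eps1 eps2 : R) (mu_hat nu_hat : nat -> R),
      0 < eps1 -> 0 < eps2 ->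
      (forall a, (1 <= a <= m)%N -> eps1 < mu_star a) ->
      (forall b, (1 <= b <= n)%N -> eps2 < nu_star b) ->
      is_dist m mu_hat -> is_dist n nu_hat ->
      TV m mu_hat mu_star <= eps1 / 2 ->
      TV n nu_hat nu_star <= eps2 / 2 ->
      eps1 <= eps0 -> eps2 <= eps0 ->
      forall theta_hat : 'cV[R]_d,
        is_lsq_min (col_mx (Amat m n phi nu_hat) (Bmat m n phi mu_hat))
                   (col_mx (cvec m eta mu_hat) (dvec n eta nu_hat)) theta_hat ->
        (forall theta : 'cV[R]_d,
           is_lsq_min (col_mx (Amat m n phi nu_hat) (Bmat m n phi mu_hat))
                      (col_mx (cvec m eta mu_hat) (dvec n eta nu_hat)) theta ->
           theta = theta_hat) /\
        sqnorm (theta_hat - theta_star) <=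
          C * (eps1 ^+ 2 * (1 + m%:R * (eps2 ^+ 2 + 1))
               + eps2 ^+ 2 * (1 + n%:R * (eps1 ^+ 2 + 1))).
Proof.
move=> _ _ eta_gt0 _ _ _ QRE mu_star_gt0 nu_star_gt0 full_rank.
have [c1 c1_gt0 mu_star_ge] := pos_dist_lbound mu_star_gt0.
have [c2 c2_gt0 nu_star_ge] := pos_dist_lbound nu_star_gt0.
have [eps0 eps0_gt0 [C C_ge0 rate]] := estimation_rate c1_gt0 c2_gt0
  mu_star_ge nu_star_ge (QRE_design_eq eta_gt0 QRE) full_rank.
exists eps0, (C + 1); split=> //; split; first lra.
move=> e1 e2 mu nu e1_gt0 e2_gt0 _ _ _ _ mu_TV nu_TV e1_le e2_le theta min_theta.
have [unique err] := rate e1 e2 mu nu e1_gt0 e2_gt0 e1_le e2_le mu_TV nu_TV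
  theta min_theta.
split=> //; apply: le_trans err _.
apply: ler_pM; rewrite ?addr_ge0 ?sqr_ge0 ?lerDl //.
(* the paper's rate only adds nonnegative cross terms to e1^2 + e2^2 *)
rewrite -subr_ge0 (_ : _ - _ = e1 ^+ 2 * (m%:R * (e2 ^+ 2 + 1))
                             + e2 ^+ 2 * (n%:R * (e1 ^+ 2 + 1))); last by ring.
by apply: addr_ge0; apply: mulr_ge0; rewrite ?sqr_ge0 // mulr_ge0 // addr_ge0 ?sqr_ge0.
Qed.
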